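(* Let $1\le D\le K-1$ and let $\mathbf{L}$ be the $(K,D)$ AIR matrix. Let $\mathbf{L}(j,k)=1$ with $j\ge K-D$. (1) If the entry $(j,k)$ lies in the odd submatrix $\mathbf{I}_{\beta_{2i+1}\lambda_{2i+1}\times\lambda_{2i+1}}$ for some $i\in[0:\lceil l/2\rceil-1]$, then $d_{up}(j,k)=\lambda_{2i+1}$. (2) If the entry $(j,k)$ lies in the even submatrix $\mathbf{I}_{\lambda_{2i}\times\beta_{2i}\lambda_{2i}}$ for some $i\in[0:\lfloor l/2\rfloor]$, and $k_R=k-(K-D-\lambda_{2i-1})=c\lambda_{2i}+d$ with integers $c\ge0$, $0\le d<\lambda_{2i}$, then $d_{up}(j,k)=\lambda_{2i-1}-c\lambda_{2i}$.
   Context: Notation: $[a:b]=\{a,\dots,b\}$. Let $K,D$ be integers with $1\le D\le K-1$. Define $\lambda_{-1}=K-D$, $\lambda_0=D$ and recursively, by Euclidean division, $\lambda_{i-1}=\beta_i\lambda_i+\lambda_{i+1}$ with $0\le\lambda_{i+1}<\lambda_i$, for $i=0,1,2,\dots$, stopping at the index $l\ge0$ with $\lambda_{l+1}=0$; $\beta_0\ge0$ may be $0$, $\beta_i\ge1$ for $i\ge1$. Set $\lambda_j=0$ for $j>l$. For $n\mid m$, $\mathbf{I}_{m\times n}$ is $m/n$ copies of the $n\times n$ identity stacked vertically and $\mathbf{I}_{n\times m}$ its transpose. The $(K,D)$ AIR matrix $\mathbf{L}$ is the $K\times(K-D)$ $0/1$ matrix (rows $[0:K-1]$, columns $[0:K-D-1]$)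 that is zero except in the blocks: the $(K-D)\times(K-D)$ identity in rows and columns $[0:K-D-1]$; for $0\le 2i\le l$, the even submatrix $\mathbf{I}_{\lambda_{2i}\times\beta_{2i}\lambda_{2i}}$ in rows $[K-\lambda_{2i}:K-1]$, columns $[K-D-\lambda_{2i-1}:K-D-\lambda_{2i+1}-1]$ (absent if $i=0,\beta_0=0$); for $1\le 2i+1\le l$, the odd submatrix $\mathbf{I}_{\beta_{2i+1}\lambda_{2i+1}\times\lambda_{2i+1}}$ in rows $[K-\lambda_{2i}:K-\lambda_{2i+2}-1]$, columns $[K-D-\lambda_{2i+1}:K-D-1]$. Up-distance: for $\mathbf{L}(j,k)=1$ with $j\ge K-D$, let $j'$ be the largest row index with $j'<j$ and $\mathbf{L}(j',k)=1$; then $d_{up}(j,k)=j-j'$. *)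

From mathcomp Require Import all_boot all_order all_algebra.
Set Implicit Arguments. Unset Strict Implicit. Unset Printing Implicit Defensive.

(* Euclidean remainder sequence, shifted by one:
   lam K D n = lambda_{n-1}; so lam K D 0 = K-D = lambda_{-1}, lam K D 1 = D = lambda_0,
   lam K D (n+2) = lambda_{n+1} = lambda_{n-1} mod lambda_n, and once a zero is
   reached all further terms are 0. *)
Fixpoint lampair (a b : nat) (n : nat) : nat * nat :=
  match n with
  | 0 => (a, b)
  | n'.+1 => let p := lampair a b n' in
             (p.2, if p.2 == 0 then 0 else p.1 %% p.2)
  end.

Definition lam (K D n : nat) : nat := (lampair (K - D) D n).1.

(* l : the index with lambda_{l+1} = 0 (first such), i.e. first n with lam (n+2) = 0.
   (l < D < K, so searching in [0, K) suffices.) *)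
Definition air_l (K D : nat) : nat := find (fun n => lam K D n.+2 == 0) (iota 0 K).

(* Position of (j,k) inside the even block I_{lambda_{2i} x beta_{2i} lambda_{2i}}:
   rows [K-lambda_{2i} : K-1], columns [K-D-lambda_{2i-1} : K-D-lambda_{2i+1}-1]. *)
Definition in_even (K D i j k : nat) : bool :=
  (K - lam K D (2*i).+1 <= j < K) &&
  (K - D - lam K D (2*i) <= k < K - D - lam K D (2*i).+2).

(* Entry of I_{n x m} (horizontal copies of I_n): 1 iff r = c mod n. *)
Definition even_entry (K D i j k : nat) : bool :=
  in_even K D i j k &&
  ((j - (K - lam K D (2*i).+1)) == (k - (K - D - lam K D (2*i))) %% lam K D (2*i).+1).

(* Odd block I_{beta_{2i+1} lambda_{2i+1} x lambda_{2i+1}}: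
   rows [K-lambda_{2i} : K-lambda_{2i+2}-1], columns [K-D-lambda_{2i+1} : K-D-1]. *)
Definition in_odd (K D i j k : nat) : bool :=
  (K - lam K D (2*i).+1 <= j < K - lam K D (2*i).+3) &&
  (K - D - lam K D (2*i).+2 <= k < K - D).

(* Entry of I_{m x n} (vertical copies of I_n): 1 iff r mod n = c. *)
Definition odd_entry (K D i j k : nat) : bool :=
  in_odd K D i j k &&
  ((j - (K - lam K D (2*i).+1)) %% lam K D (2*i).+2 == k - (K - D - lam K D (2*i).+2)).

Definition airL (K D j k : nat) : bool :=
  [&& j < K - D, k < K - D & j == k]
    || has (fun i => (2*i <= air_l K D) && even_entry K D i j k) (iota 0 (air_l K D).+1)
    || has (fun i => ((2*i).+1 <= air_l K D) && odd_entry K D i j k) (iota 0 (air_l K D).+1).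

Definition dup (K D j k : nat) : nat :=
  j - \max_(j' < j | airL K D j' k) (j' : nat).

From mathcomp Require Import all_boot all_order all_algebra.
From mathcomp Require Import zify.

(* Measure rows by their distance K - j to the bottom and columns by their
   distance K - D - k to the right border of L.  The even and odd blocks then
   tile the lower part of L as a staircase cut out by the remainder sequence,
   and since lambda is nonincreasing every position lies in at most one block.
   In column k of an odd block i the ones recur every lambda_{2i+1} rows; in
   column k of an even block there is exactly one.  Above the top row
   K - lambda_{2i} of either block, column K - D - t meets its next one exactly
   t rows higher: in the identity part when i = 0, and in the odd block i - 1
   otherwise, because lambda_{2i-1} = lambda_{2i+1} mod lambda_{2i}.  Adding the
   distances inside the block to t gives both formulas. *)

Import GRing.Theory.

Section AIRMatrix.

Context {K D : nat}.

Lemma lamSS n :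
  lam K D n.+2 = if lam K D n.+1 == 0 then 0 else lam K D n %% lam K D n.+1.
Proof. by []. Qed.

Lemma lamS_leq n : 0 < n -> lam K D n.+1 <= lam K D n.
Proof.
case: n => [//|n] _; rewrite lamSS; case: eqP => [->//|/eqP nz].
by rewrite ltnW // ltn_pmod // lt0n.
Qed.

Lemma lam_nonincreasing m n : 0 < m -> m <= n -> lam K D n <= lam K D m.
Proof.
move=> m_gt0 /subnK <-; elim: (n - m) => [//|x IHx].
by rewrite addSn (leq_trans _ IHx) // lamS_leq ?addn_gt0 ?m_gt0 ?orbT.
Qed.

Lemma lam_leSS n : lam K D n.+2 <= lam K D n.
Proof.
case: n => [|n]; first by rewrite lamSS; case: ifP => // _; apply: leq_mod.
by apply: lam_nonincreasing => //; lia.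
Qed.

Lemma lam_le_D n : 0 < n -> lam K D n <= D.
Proof. by move=> n_gt0; have := lam_nonincreasing 1 n isT n_gt0. Qed.

Lemma lam_le_KD n : n != 1 -> lam K D n <= K - D.
Proof.
case: n => [//|[//|n]] _.
exact: leq_trans (lam_nonincreasing 2 n.+2 isT _) (lam_leSS 0).
Qed.

Lemma lam_euclid n : 0 < n -> 0 < lam K D n.+1 ->
  exists2 q, 0 < q & lam K D n = q * lam K D n.+1 + lam K D n.+2.
Proof.
move=> n_gt0 lam_gt0; exists (lam K D n %/ lam K D n.+1).
  by rewrite divn_gt0 // lamS_leq.
by rewrite lamSS; case: eqP lam_gt0 => [->|_ _] //; apply: divn_eq.
Qed.

Lemma in_odd_inj {i i' j k} : in_odd K D i j k -> in_odd K D i' j k -> i = i'.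
Proof.
wlog lt_ii' : i i' / i < i'.
  move=> hw Hi Hi'.
  by case: (ltngtP i i') => [lt|lt|//]; [exact: hw | exact/esym/(hw i' i)].
rewrite /in_odd => /andP[/andP[_ hj] _] /andP[/andP[hj' _] _].
have := lam_nonincreasing (2*i).+3 (2*i').+1 isT; lia.
Qed.

Lemma in_even_inj {i i' j k} : in_even K D i j k -> in_even K D i' j k -> i = i'.
Proof.
wlog lt_ii' : i i' / i < i'.
  move=> hw Hi Hi'.
  by case: (ltngtP i i') => [lt|lt|//]; [exact: hw | exact/esym/(hw i' i)].
rewrite /in_even => /andP[_ /andP[_ hk]] /andP[_ /andP[hk' _]].
have := lam_nonincreasing (2*i).+2 (2*i') isT; lia.
Qed.

Lemma in_even_odd_disjoint {i i' j k} :
  in_even K D i j k -> in_odd K D i' j k -> False.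
Proof.
rewrite /in_even /in_odd => /andP[/andP[hj _] /andP[_ hk]].
move=> /andP[/andP[_ hj'] /andP[hk' _]].
case: (leqP i i') => [le_ii'|lt_i'i].
  have := lam_nonincreasing (2*i).+2 (2*i').+2 isT; lia.
have := lam_nonincreasing (2*i').+3 (2*i).+1 isT; lia.
Qed.

Lemma airL_cases j k : airL K D j k ->
  [/\ j < K - D, k < K - D & j = k] \/
  (exists2 i, 2*i <= air_l K D & even_entry K D i j k) \/
  (exists2 i, (2*i).+1 <= air_l K D & odd_entry K D i j k).
Proof.
case/orP=> [/orP[/and3P[? ? /eqP ?]|/hasP[i _ /andP[? ?]]]|/hasP[i _ /andP[? ?]]].
- by left.
- by right; left; exists i.
- by right; right; exists i.
Qed.

Lemma airL_identity_part j k : j < K - D -> airL K D j k = (j == k).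
Proof.
move=> hj; apply/idP/idP => [|/eqP <-]; last by rewrite /airL hj eqxx.
case/airL_cases=> [[_ _ ->//]|[[i _ /andP[Hi _]]|[i _ /andP[Hi _]]]].
  move: Hi; rewrite /in_even; have := lam_le_D (2*i).+1 isT; lia.
move: Hi; rewrite /in_odd; have := lam_le_D (2*i).+1 isT; lia.
Qed.

Lemma airL_odd_block {i j k} : (2*i).+1 <= air_l K D -> in_odd K D i j k ->
  airL K D j k =
  ((j - (K - lam K D (2*i).+1)) %% lam K D (2*i).+2
     == k - (K - D - lam K D (2*i).+2)).
Proof.
move=> hl Hi; apply/idP/idP => [|entry]; last first.
  apply/orP; right; apply/hasP; exists i; first by rewrite mem_iota; lia.
  by rewrite hl /odd_entry Hi.
case/airL_cases=> [[hj _ _]|[[i' _ /andP[Hi' _]]|[i' _ /andP[Hi' entry]]]].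
- move: Hi; rewrite /in_odd; have := lam_le_D (2*i).+1 isT; lia.
- by case: (in_even_odd_disjoint Hi' Hi).
- by rewrite (in_odd_inj Hi Hi').
Qed.

Lemma airL_even_block {i j k} : 2*i <= air_l K D -> in_even K D i j k ->
  airL K D j k =
  (j - (K - lam K D (2*i).+1)
     == (k - (K - D - lam K D (2*i))) %% lam K D (2*i).+1).
Proof.
move=> hl Hi; apply/idP/idP => [|entry]; last first.
  apply/orP; left; apply/orP; right; apply/hasP; exists i.
    by rewrite mem_iota; lia.
  by rewrite hl /even_entry Hi.
case/airL_cases=> [[hj _ _]|[[i' _ /andP[Hi' entry]]|[i' _ /andP[Hi' _]]]].
- move: Hi; rewrite /in_even; have := lam_le_D (2*i).+1 isT; lia.
- by rewrite (in_even_inj Hi Hi').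
- by case: (in_even_odd_disjoint Hi Hi').
Qed.

Lemma airL_above_block i k y : 2*i <= air_l K D ->
  0 < y <= lam K D (2*i) -> 0 < K - D - k <= lam K D (2*i) ->
  airL K D (K - lam K D (2*i).+1 - y) k = (y == K - D - k).
Proof.
case: i => [|i] hl hy hk.
  have lam0 : lam K D 0 = K - D by [].
  have lam1 : lam K D 1 = D by [].
  rewrite muln0 lam0 in hy hk; rewrite muln0 lam1.
  by rewrite airL_identity_part; [apply/eqP/eqP; lia | lia].
rewrite mulnS add2n in hl hy hk *.
have [[|q] // _ Eq] := lam_euclid (2*i).+1 isT ltac:(lia).
have := lam_le_D (2*i).+1 isT; have := lam_le_KD (2*i).+2 isT => hKD hD.
rewrite (airL_odd_block (i := i)); last 2 first.
- lia.
- by rewrite /in_odd; apply/andP; split; apply/andP; split; lia.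
have -> : K - lam K D (2*i).+3 - y - (K - lam K D (2*i).+1)
          = q * lam K D (2*i).+2 + (lam K D (2*i).+2 - y).
  by rewrite Eq [q.+1 * _]mulSn; lia.
by rewrite modnMDl modn_small; [apply/eqP/eqP; lia | lia].
Qed.

Lemma neq_modn_window p a b : 0 < p -> b < a < b + p -> a %% p != b %% p.
Proof.
move=> p_gt0 /andP[ba abp]; apply/negP => /eqP eq_mod.
have /dvdn_leq : p %| a - b by rewrite -eqn_mod_dvd ?eq_mod //; lia.
lia.
Qed.

Lemma dup_nearest_one {j k w} : w < j -> airL K D w k ->
  (forall j', w < j' < j -> ~~ airL K D j' k) -> dup K D j k = j - w.
Proof.
move=> wj Lw gap; congr (j - _); apply/eqP; rewrite eqn_leq; apply/andP; split.
  apply/bigmax_leqP => j' Lj'; case: (leqP (j' : nat) w) => // wj'.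
  by have := gap j'; rewrite wj' ltn_ord Lj' => /(_ isT).
exact: (@leq_bigmax_cond _ _ (fun j' : 'I_j => (j' : nat)) (Ordinal wj)).
Qed.

Lemma dup_past_block_top {i j k} : 2*i <= air_l K D ->
  K - lam K D (2*i).+1 <= j -> 0 < K - D - k <= lam K D (2*i) ->
  (forall j', K - lam K D (2*i).+1 <= j' < j -> ~~ airL K D j' k) ->
  dup K D j k = j - (K - lam K D (2*i).+1) + (K - D - k).
Proof.
move=> hl hj hk gap; have := lam_le_D (2*i).+1 isT => hD.
rewrite (dup_nearest_one (w := K - lam K D (2*i).+1 - (K - D - k))).
- lia.
- lia.
- by rewrite airL_above_block ?eqxx //; lia.
move=> j' /andP[wj' j'j]; case: (leqP (K - lam K D (2*i).+1) j') => top_j'.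
  by apply: gap; rewrite top_j'.
have -> : j' = K - lam K D (2*i).+1 - (K - lam K D (2*i).+1 - j') by lia.
by rewrite airL_above_block //; lia.
Qed.

Lemma dup_odd_block {i j k} : (2*i).+1 <= air_l K D ->
  in_odd K D i j k -> airL K D j k -> dup K D j k = lam K D (2*i).+2.
Proof.
move=> hl Hi; move: (Hi); rewrite /in_odd => /andP[/andP[hj1 hj2] /andP[hk1 hk2]].
have p_gt0 : 0 < lam K D (2*i).+2 by lia.
have := lam_le_D (2*i).+1 isT => a1_le_D.
rewrite (airL_odd_block hl Hi) => /eqP entry.
have in_block j' : K - lam K D (2*i).+1 <= j' < j -> in_odd K D i j' k.
  by move=> /andP[? ?]; rewrite /in_odd; apply/andP; split; apply/andP; split; lia.
have gap j' : K - lam K D (2*i).+1 <= j' < j -> j - lam K D (2*i).+2 < j' ->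
    ~~ airL K D j' k.
  move=> hj' jpj'; rewrite (airL_odd_block hl (in_block j' hj')) -entry.
  by rewrite eq_sym neq_modn_window //; lia.
have [le_pj|lt_jp] := leqP (lam K D (2*i).+2) (j - (K - lam K D (2*i).+1)).
  rewrite (dup_nearest_one (w := j - lam K D (2*i).+2)); [lia | lia | |].
    rewrite (airL_odd_block hl (in_block _ _)); last by lia.
    by rewrite -entry -[in X in _ == X %% _](subnK le_pj) modnDr subnAC.
  by move=> j' /andP[? ?]; apply: gap; lia.
rewrite modn_small // in entry.
have := lam_leSS (2*i); have := lam_le_KD (2*i).+2 isT => p_le_KD p_le.
rewrite (dup_past_block_top (i := i)); [lia | lia | lia | lia |].
by move=> j' hj'; apply: (gap _ hj'); case/andP: hj' => *; lia.
Qed.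

Lemma dup_even_block {i j k c d} : 2*i <= air_l K D ->
  in_even K D i j k -> airL K D j k ->
  k - (K - D - lam K D (2*i)) = c * lam K D (2*i).+1 + d ->
  d < lam K D (2*i).+1 ->
  dup K D j k + c * lam K D (2*i).+1 = lam K D (2*i).
Proof.
move=> hl Hi; move: (Hi); rewrite /in_even => /andP[/andP[hj1 hj2] /andP[hk1 hk2]].
rewrite (airL_even_block hl Hi) => /eqP entry Ek hd.
rewrite Ek modnMDl modn_small // in entry.
have := lam_le_KD (2*i) ltac:(lia).
rewrite (dup_past_block_top (i := i)); [lia | lia | lia | lia |].
move=> j' /andP[? ?]; rewrite (airL_even_block hl); last first.
  by rewrite /in_even; apply/andP; split; apply/andP; split; lia.
by rewrite Ek modnMDl modn_small //; lia.
Qed.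

End AIRMatrix.

(* Block membership already forces K - D <= j and rules out degenerate D. *)
Theorem lemma2 (K D j k : nat) :
  1 <= D -> D <= K - 1 ->
  airL K D j k -> K - D <= j ->
  (forall i : nat, i < uphalf (air_l K D) -> in_odd K D i j k ->
     dup K D j k = lam K D (2*i).+2) /\
  (forall i : nat, i <= (air_l K D)./2 -> in_even K D i j k ->
     forall c d : nat,
       k - (K - D - lam K D (2*i)) = c * lam K D (2*i).+1 + d ->
       d < lam K D (2*i).+1 ->
       Posz (dup K D j k) = (Posz (lam K D (2*i)) - Posz (c * lam K D (2*i).+1))%R).
Proof.
move=> _ _ Ljk _; split=> [i hi Hi|i hi Hi c d Ek hd].
  by apply: dup_odd_block Hi Ljk; move: hi; rewrite uphalfE; lia.
have hl : 2*i <= air_l K D by move: hi; rewrite -divn2; lia.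
by rewrite -(dup_even_block hl Hi Ljk Ek hd) PoszD addrK.
Qed.
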